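(* Let $\Gamma$ be a finite undirected graph with girth $g(\Gamma)\ge 5$. Then $G_{aut}^+(\Gamma)=G_{aut}^*(\Gamma)$; that is, the generators of $C(G_{aut}^+(\Gamma))$ satisfy $u_{ij}u_{kl}=u_{kl}u_{ij}$ for all $i,j,k,l$ with $(i,k)\in E$ and $(j,l)\in E$.
   Context: $\Gamma=(V,E)$ is a finite simple undirected graph, $V=\{1,\dots,n\}$. The girth is the length of a shortest cycle in $\Gamma$. $C(G_{aut}^+(\Gamma))$ is the universal unital $C^*$-algebra generated by $u_{ij}$, $1\le i,j\le n$, with relations: (R1) $u_{ij}=u_{ij}^*=u_{ij}^2$; (R2) $\sum_{l} u_{il}=1=\sum_{l} u_{li}$ for all $i$; (R3) $u_{ij}u_{kl}=u_{kl}u_{ij}=0$ whenever exactly one of $(i,k)\in E$, $(j,l)\in E$ holds. $C(G_{aut}^*(\Gamma))$ is the quotient by the additional relations (R4) $u_{ij}u_{kl}=u_{kl}u_{ij}$ for all $(i,k)\in E$, $(j,l)\in E$; ''$G_{aut}^+(\Gamma)=G_{aut}^*(\Gamma)$'' means (R4) already holds in $C(G_{aut}^+(\Gamma))$. *)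

From Stdlib Require Import Reals.
From HB Require Import structures.
From mathcomp Require Import all_boot all_order all_algebra.

Set Implicit Arguments.
Unset Strict Implicit.
Unset Printing Implicit Defensive.

Definition Cplx : Type := (R * R)%type.
Definition Cadd (a b : Cplx) : Cplx := (Rplus a.1 b.1, Rplus a.2 b.2).
Definition Cmul (a b : Cplx) : Cplx :=
  (Rminus (Rmult a.1 b.1) (Rmult a.2 b.2), Rplus (Rmult a.1 b.2) (Rmult a.2 b.1)).
Definition Cconj (a : Cplx) : Cplx := (a.1, Ropp a.2).
Definition Cone : Cplx := (R1, R0).
Definition Cabs (a : Cplx) : R := sqrt (Rplus (Rmult a.1 a.1) (Rmult a.2 a.2)).

Record is_unital_cstar_algebra (A : pzRingType) (smul : Cplx -> A -> A)
    (star : A -> A) (norm : A -> R) : Prop := {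
  smulDl : forall a b x, smul (Cadd a b) x = (smul a x + smul b x)%R;
  smulDr : forall a x y, smul a (x + y)%R = (smul a x + smul a y)%R;
  smulA  : forall a b x, smul (Cmul a b) x = smul a (smul b x);
  smul1  : forall x, smul Cone x = x;
  smulMl : forall a x y, smul a (x * y)%R = (smul a x * y)%R;
  smulMr : forall a x y, smul a (x * y)%R = (x * smul a y)%R;
  starK  : forall x, star (star x) = x;
  starD  : forall x y, star (x + y)%R = (star x + star y)%R;
  starM  : forall x y, star (x * y)%R = (star y * star x)%R;
  starZ  : forall a x, star (smul a x) = smul (Cconj a) (star x);
  norm_ge0 : forall x, Rle R0 (norm x);
  norm_eq0 : forall x, norm x = R0 -> x = 0%R;
  norm_triangle : forall x y, Rle (norm (x + y)%R) (Rplus (norm x) (norm y));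
  normZ : forall a x, norm (smul a x) = Rmult (Cabs a) (norm x);
  norm_subM : forall x y, Rle (norm (x * y)%R) (Rmult (norm x) (norm y));
  norm_cstar : forall x, norm (star x * x)%R = Rmult (norm x) (norm x);
  norm_complete : forall s : nat -> A,
    (forall eps, Rlt R0 eps -> exists N : nat, forall p q : nat,
        (N <= p)%N -> (N <= q)%N -> Rlt (norm (s p - s q)%R) eps) ->
    exists x : A, forall eps, Rlt R0 eps -> exists N : nat, forall p : nat,
        (N <= p)%N -> Rlt (norm (s p - x)%R) eps
}.

Definition simple_graph (n : nat) (e : rel 'I_n) : Prop :=
  symmetric e /\ irreflexive e.

Definition has_cycle_of_length (n : nat) (e : rel 'I_n) (m : nat) : Prop :=
  exists s : seq 'I_n, [/\ size s = m, (3 <= m)%N, uniq s & cycle e s].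

(* girth(e) >= g, with the convention girth = infinity for acyclic graphs *)
Definition girth_ge (n : nat) (e : rel 'I_n) (g : nat) : Prop :=
  forall m, has_cycle_of_length e m -> (g <= m)%N.

Definition graph_magic_unitary (n : nat) (e : rel 'I_n) (A : pzRingType)
    (star : A -> A) (u : 'I_n -> 'I_n -> A) : Prop :=
  [/\ forall i j, u i j = star (u i j) /\ u i j = (u i j * u i j)%R,
      forall i, (\sum_(l < n) u i l)%R = 1%R /\ (\sum_(l < n) u l i)%R = 1%R
    & forall i j k l, (e i k != e j l) ->
         (u i j * u k l)%R = 0%R /\ (u k l * u i j)%R = 0%R].

From Stdlib Require Import Reals.
From HB Require Import structures.
From mathcomp Require Import all_boot all_order all_algebra.

Set Implicit Arguments.
Unset Strict Implicit.
Unset Printing Implicit Defensive.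

Import GRing.Theory.
Local Open Scope ring_scope.

(* Let P = u i j and Q = u k l with i ~ k and j ~ l, and put
   S = \sum_(s ~ k, s != i) u s j and T = \sum_(q ~ l, q != j) u i q.
   The row and column sums of u give Q (P + S) = Q = Q (P + T) and P T = 0,
   and since two distinct vertices of a graph without 4-cycles have at most
   one common neighbour, S T = S Q T.  Hence X = P Q (1 - P) = P Q T
   = P Q (P + S) T = P Q S Q T = X Q (1 - P).  In a C*-algebra this forces
   X = 0: with R = (1 - P) Q (1 - P) one has X^* X = R - R^2 = X^* X R, so
   X^* X is a self-adjoint element of square zero.  Then P Q = P Q P is
   self-adjoint, i.e. P Q = Q P. *)

Definition is_projection (A : pzRingType) (star : A -> A) (p : A) : Prop :=
  star p = p /\ p * p = p.

Section CStarAlgebra.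

Variables (A : pzRingType) (smul : Cplx -> A -> A) (star : A -> A) (norm : A -> R).
Hypothesis HA : is_unital_cstar_algebra smul star norm.

Lemma star0 : star 0 = 0.
Proof. by apply: (@addrI _ (star 0)); rewrite addr0 -(starD HA) addr0. Qed.

Lemma star1 : star 1 = 1.
Proof. by have := starM HA (star 1) 1; rewrite mulr1 (starK HA) mulr1 => <-. Qed.

Lemma starN x : star (- x) = - star x.
Proof. by apply/eqP; rewrite -subr_eq0 opprK -(starD HA) addNr star0. Qed.

Lemma norm0 : norm 0 = R0.
Proof.
have smul0 x : smul (R0, R0) x = 0.
  apply: (@addrI _ (smul (R0, R0) x)).
  by rewrite addr0 -(smulDl HA) /Cadd /= Rplus_0_l.
by have := normZ HA (R0, R0) 0; rewrite smul0 /Cabs /= Rmult_0_l Rplus_0_l sqrt_0 Rmult_0_l.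
Qed.

Lemma cstar_eq0 x : star x * x = 0 -> x = 0.
Proof.
move=> xx0; apply: (norm_eq0 HA).
by have := norm_cstar HA x; rewrite xx0 norm0 => /esym /Rmult_integral [].
Qed.

Lemma projection_compl p : is_projection star p -> is_projection star (1 - p).
Proof.
case=> sp pp; split; first by rewrite (starD HA) starN star1 sp.
by rewrite mulrBr mulr1 mulrBl mul1r pp subrr subr0.
Qed.

Section TwoProjections.

Variables p q : A.
Hypotheses (proj_p : is_projection star p) (proj_q : is_projection star q).

Let pc := 1 - p.
Let x := p * q * pc.
Let r := pc * q * pc.

Lemma compression_normal : star x * x = r - r * r.
Proof.
have [sp pp] := proj_p; have [sq qq] := proj_q.
have [spc pcpc] := projection_compl proj_p.
have sx : star x = pc * q * p by rewrite /x !(starM HA) sp sq spc mulrA.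
have sandwich t : t * t = t -> pc * q * t * (t * q * pc) = pc * q * t * q * pc.
  by move=> tt; rewrite !mulrA -(mulrA _ t t) tt.
apply/eqP; rewrite eq_sym subr_eq sx /x /r !sandwich //.
by rewrite -!mulrDl -mulrDr /pc subrKC mulr1 -(mulrA _ q q) qq.
Qed.

Lemma compression_eq0 : x = x * (q * pc) -> x = 0.
Proof.
move=> xqpc.
have xr : x = x * r.
  have xpc : x * pc = x by rewrite /x -mulrA (projection_compl proj_p).2.
  by rewrite {1}xqpc /r !mulrA xpc.
set y := star x * x.
have yr : y = y * r by rewrite /y -mulrA -xr.
have yy : y * y = 0.
  by rewrite {2}/y compression_normal mulrBr (mulrA y r r) -!yr subrr.
have sy : star y = y by rewrite /y (starM HA) (starK HA).
have y0 : y = 0 by apply: cstar_eq0; rewrite sy.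
exact: cstar_eq0.
Qed.

Lemma projection_commute : p * q * (1 - p) = p * q * (1 - p) * (q * (1 - p)) ->
  p * q = q * p.
Proof.
move/compression_eq0 => /eqP; rewrite /x /pc mulrBr mulr1 subr_eq0 => /eqP pqp.
have [sp _] := proj_p; have [sq _] := proj_q.
have := congr1 star pqp; rewrite !(starM HA) sp sq mulrA => qp.
by rewrite qp.
Qed.

End TwoProjections.

End CStarAlgebra.

Section SimpleGraph.

Variables (n : nat) (e : rel 'I_n).
Hypothesis e_simple : simple_graph e.

Lemma adj_neq a b : e a b -> a != b.
Proof. by apply: contraTneq => ->; rewrite e_simple.2. Qed.

Lemma common_neighbour_uniq a b c d : ~ has_cycle_of_length e 4 ->
  a != b -> e a c -> e c b -> e a d -> e d b -> c = d.
Proof.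
move=> no_square ab eac ecb ead edb; apply/eqP; apply: contraT => cd.
have [esym _] := e_simple.
have ebd : e b d by rewrite esym.
have eda : e d a by rewrite esym.
case: no_square; exists [:: a; c; b; d]; split => //=; last by rewrite eac ecb ebd eda.
by rewrite !inE !negb_or ab cd !adj_neq.
Qed.

Section MagicUnitary.

Variables (A : pzRingType) (star : A -> A) (u : 'I_n -> 'I_n -> A).
Hypothesis Hu : graph_magic_unitary e star u.

Lemma magic_projection i j : is_projection star (u i j).
Proof. by have [/(_ i j) [s1 s2] _ _] := Hu; split; apply/esym. Qed.

Lemma magic_sum_row i : \sum_l u i l = 1.
Proof. by have [_ /(_ i) []] := Hu. Qed.

Lemma magic_sum_col j : \sum_l u l j = 1.
Proof. by have [_ /(_ j) []] := Hu. Qed.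

Lemma magic_mul_eq0 a b c d : e a c != e b d -> u a b * u c d = 0.
Proof. by have [_ _ /(_ a b c d) H] := Hu => /H []. Qed.

Lemma magic_mul_row_nbrs a b c : e a c -> u a b * \sum_(q | e b q) u c q = u a b.
Proof.
move=> eac; rewrite mulr_sumr big_rmcond => [|q ebq]; last first.
  by rewrite magic_mul_eq0 // eac (negbTE ebq).
by rewrite -mulr_sumr magic_sum_row mulr1.
Qed.

Lemma magic_row_nbrs_mul a b c : e c a -> (\sum_(q | e b q) u c q) * u a b = u a b.
Proof.
move=> eca; rewrite mulr_suml big_rmcond => [|q ebq]; last first.
  by rewrite magic_mul_eq0 // eca e_simple.1 (negbTE ebq).
by rewrite -mulr_suml magic_sum_row mul1r.
Qed.

Lemma magic_mul_col_nbrs a b d : e b d -> u a b * \sum_(s | e a s) u s d = u a b.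
Proof.
move=> ebd; rewrite mulr_sumr big_rmcond => [|s eas]; last first.
  by rewrite magic_mul_eq0 // ebd (negbTE eas).
by rewrite -mulr_sumr magic_sum_col mulr1.
Qed.

(* The relations (R3) say that u commutes with the adjacency matrix. *)
Lemma magic_adjacency_commute i l :
  \sum_(q | e l q) u i q = \sum_(t | e i t) u t l.
Proof.
transitivity (\sum_(q | e l q) \sum_(t | e i t) u i q * u t l).
  by apply: eq_bigr => q elq; rewrite -mulr_sumr magic_mul_col_nbrs // e_simple.1.
rewrite exchange_big /=; apply: eq_bigr => t eit.
by rewrite -mulr_suml magic_row_nbrs_mul.
Qed.

Section Square.

Variables i j k l : 'I_n.
Hypotheses (eik : e i k) (ejl : e j l).

Let P := u i j.
Let Q := u k l.
Let S := \sum_(s | e k s && (s != i)) u s j.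
Let T := \sum_(q | e l q && (q != j)) u i q.

Lemma col_nbrs_split : \sum_(s | e k s) u s j = P + S.
Proof. by rewrite (bigD1 i) // e_simple.1. Qed.

Lemma row_nbrs_split : \sum_(q | e l q) u i q = P + T.
Proof. by rewrite (bigD1 j) // e_simple.1. Qed.

Lemma mul_col_nbrs : Q * (P + S) = Q.
Proof. by rewrite -col_nbrs_split magic_mul_col_nbrs // e_simple.1. Qed.

Lemma mul_row_nbrs : Q * (P + T) = Q.
Proof. by rewrite -row_nbrs_split magic_mul_row_nbrs // e_simple.1. Qed.

Lemma proj_mul_row_nbrs : P * (P + T) = P.
Proof. by rewrite -row_nbrs_split magic_adjacency_commute magic_mul_col_nbrs. Qed.

Hypothesis no_square : ~ has_cycle_of_length e 4.

(* Only the term c = k survives in u s j * (\sum_c u c l) * u i q: the other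
   terms need a second common neighbour c of s and i. *)
Lemma col_row_nbr_mul s q : e k s -> s != i -> e l q ->
  u s j * u i q = u s j * Q * u i q.
Proof.
move=> eks si elq.
rewrite -{1}[u s j]mulr1 -(magic_sum_col l) mulr_sumr mulr_suml (bigD1 k) //=.
rewrite big1 ?addr0 // => c ck.
have [esc|nesc] := boolP (e s c); last first.
  by rewrite magic_mul_eq0 ?mul0r // (negbTE nesc) ejl.
have [eci|neci] := boolP (e c i); last first.
  by rewrite -mulrA magic_mul_eq0 ?mulr0 // (negbTE neci) elq.
suff: c = k by move/eqP; rewrite (negbTE ck).
by apply: (common_neighbour_uniq no_square si esc eci); rewrite e_simple.1.
Qed.

Lemma col_row_nbrs : S * T = S * Q * T.
Proof.
rewrite !mulr_suml; apply: eq_bigr => s /andP [eks si].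
by rewrite !mulr_sumr; apply: eq_bigr => q /andP [elq _]; rewrite col_row_nbr_mul.
Qed.

Lemma compression_fixed : P * Q * (1 - P) = P * Q * (1 - P) * (Q * (1 - P)).
Proof.
have [_ PP] := magic_projection i j.
have QT : Q * T = Q * (1 - P).
  by rewrite mulrBr mulr1 -{2}mul_row_nbrs mulrDr addrAC subrr add0r.
have PT : P * T = 0.
  by apply: (@addrI _ (P * P)); rewrite -mulrDr proj_mul_row_nbrs PP addr0.
have XS : P * Q * (1 - P) = P * Q * S.
  by rewrite mulrBr mulr1 -{1}mul_col_nbrs !mulrDr !mulrA addrAC subrr add0r.
have XT : P * Q * (1 - P) = P * Q * T by rewrite -mulrA -QT mulrA.
rewrite [in RHS]XS -QT XT -{1}mul_col_nbrs !mulrDr mulrDl !mulrA.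
by rewrite -(mulrA _ P T) PT mulr0 add0r -(mulrA _ S T) col_row_nbrs !mulrA.
Qed.

End Square.

End MagicUnitary.

End SimpleGraph.

Theorem theorem3p4 (n : nat) (e : rel 'I_n) (Hsimple : simple_graph e)
    (Hgirth : girth_ge e 5)
    (A : pzRingType) (smul : Cplx -> A -> A) (star : A -> A) (norm : A -> R)
    (HA : is_unital_cstar_algebra smul star norm)
    (u : 'I_n -> 'I_n -> A) (Hu : graph_magic_unitary e star u) :
  forall i j k l : 'I_n, e i k -> e j l -> (u i j * u k l)%R = (u k l * u i j)%R.
Proof.
move=> i j k l eik ejl.
have no_square : ~ has_cycle_of_length e 4 by move/Hgirth.
exact: (projection_commute HA (magic_projection Hu i j) (magic_projection Hu k l)
  (compression_fixed Hsimple Hu eik ejl no_square)).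
Qed.
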